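(* Let $G$ be a group with a BN-pair $(B,N)$ carrying two group topologies $\mathcal{S}\subseteq\mathcal{T}$, and suppose $B\in\mathcal{S}$ (i.e. $B$ is $\mathcal{S}$-open). Let $\widehat{\mathrm{Id}}:\widehat{(G,\mathcal{T})}\to\widehat{(G,\mathcal{S})}$ be the unique continuous extension of the identity, and $\widehat{\mathrm{Id}_B}:\widehat{(B,\mathcal{T}_B)}\to\widehat{(B,\mathcal{S}_B)}$ the analogous map for the restricted topologies on $B$. Then $\ker\widehat{\mathrm{Id}}=\ker\widehat{\mathrm{Id}_B}$.
   Context: Completions are right uniform completions (minimal Cauchy filters), which are monoids; the kernel of a monoid homomorphism means the preimage of $1$. $\mathcal{T}_B,\mathcal{S}_B$ are the subspace topologies on $B$, and $\widehat{(B,\mathcal{T}_B)}$ is identified with the closure of $B$ in $\widehat{(G,\mathcal{T})}$. *)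

Set Implicit Arguments.
Unset Strict Implicit.

Definition set (X : Type) := X -> Prop.
Definition filt (X : Type) := set (set X).

Record gops := Gops {
  car :> Type;
  mul : car -> car -> car;
  inv : car -> car;
  one : car }.

Definition is_group (g : gops) : Prop :=
  (forall x y z : g, mul x (mul y z) = mul (mul x y) z) /\
  (forall x : g, mul (one g) x = x) /\
  (forall x : g, mul (inv x) x = one g).

Record is_subgroup (g : gops) (H : set g) : Prop := {
  sg_one : H (one g);
  sg_mul : forall x y, H x -> H y -> H (mul x y);
  sg_inv : forall x, H x -> H (inv x) }.

Definition generated (g : gops) (A : set g) : set g :=
  fun x => forall H, @is_subgroup g H -> (forall y, A y -> H y) -> H x.

Definition sub_gops (g : gops) (H : set g) (HH : @is_subgroup g H) : gops :=
  @Gops {x : g | H x}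
    (fun x y => exist _ (mul (proj1_sig x) (proj1_sig y))
                  (sg_mul HH (proj2_sig x) (proj2_sig y)))
    (fun x => exist _ (inv (proj1_sig x)) (sg_inv HH (proj2_sig x)))
    (exist _ (one g) (sg_one HH)).

(* BN-pair (Tits system).  T := B ∩ N, W := N/T; the generating set of
   involutions of W is given by a set S of representatives in N. *)
Record BN_pair (g : gops) (B N : set g) : Prop := {
  bn_B : @is_subgroup g B;
  bn_N : @is_subgroup g N;
  bn_gen : forall x, generated (fun y => B y \/ N y) x;
  bn_T_normal : forall n t, N n -> B t -> N t ->
      B (mul (mul n t) (inv n)) /\ N (mul (mul n t) (inv n));
  bn_S : exists S : set g,
      (* elements of S map to involutions of W = N/T *)
      (forall s, S s -> N s /\ ~ (B s /\ N s) /\ B (mul s s) /\ N (mul s s)) /\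
      (* W is generated by the image of S, i.e. N = <T ∪ S> *)
      (forall n, N n -> generated (fun y => (B y /\ N y) \/ S y) n) /\
      (* s B w ⊆ B w B ∪ B s w B *)
      (forall s n b, S s -> N n -> B b ->
         (exists b1 b2, B b1 /\ B b2 /\
             mul (mul s b) n = mul (mul b1 n) b2) \/
         (exists b1 b2, B b1 /\ B b2 /\
             mul (mul s b) n = mul (mul b1 (mul s n)) b2)) /\
      (forall s, S s ->
         ~ (forall x, B x <-> exists b, B b /\ x = mul (mul s b) s)) }.

Definition is_topology (X : Type) (tau : set (set X)) : Prop :=
  tau (fun _ => True) /\
  (forall (I : Type) (U : I -> set X), (forall i, tau (U i)) ->
      tau (fun x => exists i, U i x)) /\
  (forall U V, tau U -> tau V -> tau (fun x => U x /\ V x)).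

Definition is_group_topology (g : gops) (tau : set (set g)) : Prop :=
  is_topology tau /\
  (forall (x y : g) O, tau O -> O (mul x y) ->
     exists U V, tau U /\ tau V /\ U x /\ V y /\
       forall u v, U u -> V v -> O (mul u v)) /\
  (forall (x : g) O, tau O -> O (inv x) ->
     exists U, tau U /\ U x /\ forall u, U u -> O (inv u)).

Definition sub_top (g : gops) (H : set g) (HH : @is_subgroup g H)
  (tau : set (set g)) : set (set (sub_gops HH)) :=
  fun P => exists O, tau O /\ forall x : sub_gops HH, P x <-> O (proj1_sig x).

Definition nbhd (g : gops) (tau : set (set g)) (x : g) : filt g :=
  fun U => exists O, tau O /\ O x /\ forall y, O y -> U y.

Definition is_filter (X : Type) (F : filt X) : Prop :=
  F (fun _ => True) /\ ~ F (fun _ => False) /\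
  (forall U V, F U -> (forall x, U x -> V x) -> F V) /\
  (forall U V, F U -> F V -> F (fun x => U x /\ V x)).

(* A is small of order V for the right uniformity:
   entourages {(x,y) | y x^-1 ∈ V}, V a neighbourhood of 1 *)
Definition small (g : gops) (V A : set g) : Prop :=
  forall x y, A x -> A y -> V (mul y (inv x)).

Definition cauchy (g : gops) (tau : set (set g)) (F : filt g) : Prop :=
  is_filter F /\
  forall V, nbhd tau (one g) V -> exists A, F A /\ small V A.

(* points of the (right) completion: minimal Cauchy filters *)
Definition min_cauchy (g : gops) (tau : set (set g)) (F : filt g) : Prop :=
  cauchy tau F /\
  forall F', cauchy tau F' -> (forall U, F' U -> F U) -> forall U, F U -> F' U.

Definition feq (X : Type) (F F' : filt X) : Prop := forall U, F U <-> F' U.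

(* the entourage of the completion induced by V *)
Definition compl_ent (g : gops) (V : set g) (F F' : filt g) : Prop :=
  exists A, F A /\ F' A /\ small V A.

(* phi : completion of (g,tau) -> completion of (h,sigma) is a continuous
   extension of f : g -> h (the canonical image of x being the
   neighbourhood filter of x) *)
Definition is_cont_ext (g h : gops) (tau : set (set g)) (sigma : set (set h))
  (f : g -> h) (phi : filt g -> filt h) : Prop :=
  (forall F, min_cauchy tau F -> min_cauchy sigma (phi F)) /\
  (forall F, min_cauchy tau F ->
     forall W, nbhd sigma (one h) W ->
       exists V, nbhd tau (one g) V /\
         forall F', min_cauchy tau F' -> compl_ent V F F' ->
           compl_ent W (phi F) (phi F')) /\
  (forall x : g, feq (phi (nbhd tau x)) (nbhd sigma (f x))).

(* kernel: preimage of the unit (= neighbourhood filter of 1) *)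
Definition ker (g h : gops) (tau : set (set g)) (sigma : set (set h))
  (phi : filt g -> filt h) (F : filt g) : Prop :=
  min_cauchy tau F /\ feq (phi F) (nbhd sigma (one h)).

(* A point F of the T-completion of G lies in the kernel of the extended
   identity iff F contains every S-neighbourhood of 1.  Since B is an S-open
   subgroup, such an F contains B; its trace on B is then a point of the
   completion of B, in the kernel of the extended identity of B for the same
   reason, whose image in the completion of G is F.  Conversely, the image in
   G of a kernel point of B again contains every S-neighbourhood of 1. *)

From Stdlib Require Import FunctionalExtensionality PropExtensionality ProofIrrelevance Classical.
Set Implicit Arguments.
Unset Strict Implicit.

Section GroupLaws.
Variables (g : gops) (HG : is_group g).
Implicit Types x y z : g.

Lemma mulgA x y z : mul x (mul y z) = mul (mul x y) z.
Proof. exact (proj1 HG x y z). Qed.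

Lemma mul1g x : mul (one g) x = x.
Proof. exact (proj1 (proj2 HG) x). Qed.

Lemma mulVg x : mul (inv x) x = one g.
Proof. exact (proj2 (proj2 HG) x). Qed.

Lemma mulgV x : mul x (inv x) = one g.
Proof.
  transitivity (mul (mul (inv (inv x)) (inv x)) (mul x (inv x))).
  - rewrite mulVg, mul1g. reflexivity.
  - rewrite <- mulgA, (mulgA (inv x) x (inv x)), mulVg, mul1g. apply mulVg.
Qed.

Lemma mulg1 x : mul x (one g) = x.
Proof. rewrite <- (mulVg x), mulgA, mulgV, mul1g. reflexivity. Qed.

Lemma inv_unique x y : mul x y = one g -> x = inv y.
Proof. intro Hxy. rewrite <- (mulg1 x), <- (mulgV y), mulgA, Hxy, mul1g. reflexivity. Qed.

Lemma invg1 : inv (one g) = one g.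
Proof. symmetry. apply inv_unique, mul1g. Qed.

Lemma invgK x : inv (inv x) = x.
Proof. symmetry. apply inv_unique, mulgV. Qed.

Lemma invMg x y : inv (mul x y) = mul (inv y) (inv x).
Proof.
  symmetry. apply inv_unique.
  rewrite <- mulgA, (mulgA (inv x)), mulVg, mul1g. apply mulVg.
Qed.

Lemma mulgKV x y : mul (mul x (inv y)) y = x.
Proof. rewrite <- mulgA, mulVg. apply mulg1. Qed.

Lemma divgMdivg x y z : mul (mul x (inv z)) (mul z (inv y)) = mul x (inv y).
Proof. rewrite <- mulgA, (mulgA (inv z)), mulVg, mul1g. reflexivity. Qed.

Lemma divg_rcancel x y z : mul (mul x (inv z)) (inv (mul y (inv z))) = mul x (inv y).
Proof. rewrite invMg, invgK. apply divgMdivg. Qed.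

End GroupLaws.

Lemma feq_eq (X : Type) (F F' : filt X) : feq F F' -> F = F'.
Proof.
  intro HFF'. apply functional_extensionality; intro U.
  apply propositional_extensionality, HFF'.
Qed.

Lemma filter_nonempty (X : Type) (F : filt X) A : is_filter F -> F A -> exists x, A x.
Proof.
  intros [_ [Hbot [Hmono _]]] HA. apply NNPP. intro Hnone. apply Hbot.
  apply (Hmono A); auto. intros x Ax. apply Hnone. exists x; auto.
Qed.

Lemma filter_mono (X : Type) (F : filt X) (U V : set X) :
  is_filter F -> F U -> (forall x, U x -> V x) -> F V.
Proof. intros [_ [_ [Hmono _]]]. apply Hmono. Qed.

Lemma filter_meet_nonempty (X : Type) (F : filt X) (U V : set X) :
  is_filter F -> F U -> F V -> exists x, U x /\ V x.
Proof. intros HF FU FV. apply (filter_nonempty HF), HF; auto. Qed.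

Lemma min_cauchy_filter (g : gops) (tau : set (set g)) F : min_cauchy tau F -> is_filter F.
Proof. intros [[HF _] _]. exact HF. Qed.

Lemma compl_ent_sym (g : gops) (V : set g) F F' : compl_ent V F F' -> compl_ent V F' F.
Proof. intros [A [FA [F'A SA]]]. exists A. auto. Qed.

Lemma compl_ent_nbhd (g : gops) (tau : set (set g)) V a b :
  compl_ent V (nbhd tau a) (nbhd tau b) -> V (mul b (inv a)).
Proof. intros [C [[Oa [_ [Oa_a HOa]]] [[Ob [_ [Ob_b HOb]]] SC]]]. apply SC; auto. Qed.

Lemma compl_ent_trans (g : gops) (HG : is_group g) (W W1 : set g) (F G K : filt g) :
  W1 (one g) -> (forall a b, W1 a -> W1 b -> W (mul a b)) ->
  is_filter F -> is_filter G -> is_filter K ->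
  compl_ent W1 F G -> compl_ent W1 G K -> compl_ent W F K.
Proof.
  intros W1_1 HW HF HGf HK [A1 [FA1 [GA1 S1]]] [A2 [GA2 [KA2 S2]]].
  destruct (filter_meet_nonempty HGf GA1 GA2) as [z [z1 z2]].
  exists (fun x => A1 x \/ A2 x). split; [|split].
  - apply (filter_mono HF FA1); auto.
  - apply (filter_mono HK KA2); auto.
  - intros x y [Hx|Hx] [Hy|Hy];
      solve [rewrite <- (mulg1 HG (mul y (inv x))); apply HW; auto
            | rewrite <- (divgMdivg HG y x z); apply HW; auto].
Qed.

Lemma min_cauchy_feq (g : gops) (tau : set (set g)) (F F' : filt g) :
  min_cauchy tau F -> min_cauchy tau F' ->
  (forall W, nbhd tau (one g) W -> compl_ent W F F') -> feq F F'.
Proof.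
  intros [[HF HC] HmF] [[HF' HC'] HmF'] Hce.
  set (M := fun U => F U /\ F' U).
  assert (HM : cauchy tau M).
  { split. split; [|split; [|split]].
    - split; apply HF || apply HF'.
    - intros [Hbot _]. apply HF; exact Hbot.
    - intros U V [FU F'U] HUV. split.
      + apply (filter_mono HF FU); auto.
      + apply (filter_mono HF' F'U); auto.
    - intros U V [FU F'U] [FV F'V]. split; [apply HF | apply HF']; auto.
    - intros W HW. destruct (Hce W HW) as [A [FA [F'A SA]]]. exists A. split; [split|]; auto. }
  intro U. split; intro HU.
  - exact (proj2 (HmF M HM (fun U HU => proj1 HU) U HU)).
  - exact (proj1 (HmF' M HM (fun U HU => proj2 HU) U HU)).
Qed.

Section GroupTopology.
Variables (g : gops) (HG : is_group g) (tau : set (set g)) (Ht : is_group_topology tau).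

Lemma open_mulr (O : set g) c : tau O -> tau (fun y => O (mul y c)).
Proof.
  intro HO. destruct Ht as [[_ [Hunion _]] [Hmul _]].
  set (I := {U : set g | tau U /\ forall u, U u -> O (mul u c)}).
  assert (E : (fun y => O (mul y c)) = (fun y => exists i : I, proj1_sig i y)).
  { apply functional_extensionality; intro y; apply propositional_extensionality; split.
    - intro Hy. destruct (Hmul y c O HO Hy) as [U [V [HU [HV [Uy [Vc HUV]]]]]].
      exists (exist (fun U => tau U /\ forall u, U u -> O (mul u c)) U
                (conj HU (fun u Hu => HUV u c Hu Vc))). exact Uy.
    - intros [[U [HU HUO]] Uy]. auto. }
  rewrite E. apply Hunion. intro i. exact (proj1 (proj2_sig i)).
Qed.

Lemma nbhd_pt x U : nbhd tau x U -> U x.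
Proof. intros [O [_ [Ox HOU]]]. auto. Qed.

Lemma nbhd_open x O : tau O -> O x -> nbhd tau x O.
Proof. intros HO Ox. exists O. auto. Qed.

Lemma nbhd_mono x (U V : set g) : nbhd tau x U -> (forall y, U y -> V y) -> nbhd tau x V.
Proof. intros [O [HO [Ox HOU]]] HUV. exists O. auto. Qed.

Lemma nbhdI x U V : nbhd tau x U -> nbhd tau x V -> nbhd tau x (fun y => U y /\ V y).
Proof.
  intros [O1 [H1 [O1x HO1]]] [O2 [H2 [O2x HO2]]].
  exists (fun y => O1 y /\ O2 y). split; [apply Ht; auto|]. split; auto.
  intros y [? ?]; auto.
Qed.

Lemma nbhd_one_mul W : nbhd tau (one g) W ->
  exists W1, nbhd tau (one g) W1 /\ forall a b, W1 a -> W1 b -> W (mul a b).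
Proof.
  intros [O [HO [O1 HOW]]]. destruct Ht as [Htop [Hmul _]].
  destruct (Hmul (one g) (one g) O HO) as [U [V [HU [HV [U1 [V1 HUV]]]]]].
  { rewrite (mul1g HG). exact O1. }
  exists (fun y => U y /\ V y). split.
  - apply nbhd_open; [apply Htop|split]; auto.
  - intros a b [? ?] [? ?]. auto.
Qed.

Lemma nbhd_one_inv W : nbhd tau (one g) W ->
  exists W1, nbhd tau (one g) W1 /\ forall a, W1 a -> W (inv a).
Proof.
  intros [O [HO [O1 HOW]]]. destruct Ht as [_ [_ Hinv]].
  destruct (Hinv (one g) O HO) as [U [HU [U1 HUO]]].
  { rewrite (invg1 HG). exact O1. }
  exists U. split; [apply nbhd_open|]; auto.
Qed.

Lemma nbhd_one_mulV W : nbhd tau (one g) W -> exists W1, nbhd tau (one g) W1 /\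
  forall a b c, W1 a -> W1 b -> W1 c -> W (mul (mul a b) (inv c)).
Proof.
  intro HW. destruct (nbhd_one_mul HW) as [Wa [HWa Ha]].
  destruct (nbhd_one_mul HWa) as [Wb [HWb Hb]].
  destruct (nbhd_one_inv HWa) as [Wc [HWc Hc]].
  exists (fun y => Wb y /\ Wc y). split; [apply nbhdI; auto|].
  intros a b c [? ?] [? ?] [? ?]. apply Ha; auto.
Qed.

Lemma nbhd_one_small W : nbhd tau (one g) W -> exists O, tau O /\ O (one g) /\ small W O.
Proof.
  intro HW. destruct (nbhd_one_mulV HW) as [W1 [HW1 H3]].
  destruct HW1 as [O [HO [O1 HOW1]]].
  exists O. split; [|split]; auto. intros y1 y2 Hy1 Hy2.
  rewrite <- (mulg1 HG y2). apply H3; auto.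
Qed.

Lemma nbhd_min_cauchy x : min_cauchy tau (nbhd tau x).
Proof.
  assert (HF : is_filter (nbhd tau x)).
  { split; [|split; [|split]].
    - apply nbhd_open; [apply Ht | exact I].
    - exact (@nbhd_pt x _).
    - intros; eapply nbhd_mono; eauto.
    - intros; apply nbhdI; auto. }
  split; [split; [exact HF|]|].
  - intros V HV. destruct (nbhd_one_small HV) as [O [HO [O1 SO]]].
    exists (fun y => O (mul y (inv x))). split.
    + apply nbhd_open; [apply open_mulr; auto | rewrite (mulgV HG); exact O1].
    + intros y1 y2 Hy1 Hy2. rewrite <- (divg_rcancel HG y2 y1 x). apply SO; auto.
  - intros F' [HF' HC'] HF'x U [O [HO [Ox HOU]]].
    destruct (HC' (fun w => O (mul w x))) as [A [F'A SA]].
    { apply nbhd_open; [apply open_mulr; auto | rewrite (mul1g HG); exact Ox]. }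
    apply (filter_mono HF' F'A).
    intros y Ay. apply HOU. rewrite <- (mulgKV HG y x).
    exact (SA x y (nbhd_pt (HF'x A F'A)) Ay).
Qed.

Lemma cauchy_approx (F : filt g) V : cauchy tau F -> nbhd tau (one g) V ->
  exists A, F A /\ forall x, A x -> compl_ent V F (nbhd tau x).
Proof.
  intros [HF HC] HV. destruct (nbhd_one_mulV HV) as [W1 [HW1 H3]].
  destruct (HC W1 HW1) as [A [FA SA]].
  destruct HW1 as [O [HO [O1 HOW1]]].
  exists A. split; auto. intros x Ax.
  exists (fun y => exists a, A a /\ O (mul y (inv a))). split; [|split].
  - apply (filter_mono HF FA). intros a Aa. exists a.
    rewrite (mulgV HG). auto.
  - apply (nbhd_mono (U := fun y => O (mul y (inv x)))).
    + apply nbhd_open; [apply open_mulr; auto | rewrite (mulgV HG); exact O1].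
    + intros y Hy. exists x. auto.
  - intros y1 y2 [a1 [A1 O1']] [a2 [A2 O2']].
    rewrite <- (divg_rcancel HG y2 y1 a1), <- (divgMdivg HG y2 a1 a2). apply H3; auto.
Qed.

Lemma feq_of_common_approx X Y : min_cauchy tau X -> min_cauchy tau Y ->
  (forall W, nbhd tau (one g) W ->
     exists x, compl_ent W X (nbhd tau x) /\ compl_ent W Y (nbhd tau x)) ->
  feq X Y.
Proof.
  intros HX HY Happrox. apply (min_cauchy_feq HX HY). intros W HW.
  destruct (nbhd_one_mul HW) as [W1 [HW1 HWW]].
  destruct (Happrox W1 HW1) as [x [cX cY]].
  exact (compl_ent_trans HG (nbhd_pt HW1) HWW (min_cauchy_filter HX)
    (min_cauchy_filter (nbhd_min_cauchy x)) (min_cauchy_filter HY) cX (compl_ent_sym cY)).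
Qed.

End GroupTopology.

Definition tends_to_one (g h : gops) (sigma : set (set h)) (f : g -> h) (F : filt g) : Prop :=
  forall W, nbhd sigma (one h) W -> F (fun x => W (f x)).

Section ContinuousExtension.
Variables (g h : gops) (HG : is_group g) (HH : is_group h).
Variables (tau : set (set g)) (sigma : set (set h)).
Variables (Ht : is_group_topology tau) (Hs : is_group_topology sigma).
Variables (f : g -> h) (phi : filt g -> filt h) (Hphi : is_cont_ext tau sigma f phi).

Lemma cont_ext_approx F W : min_cauchy tau F -> nbhd sigma (one h) W ->
  exists A, F A /\ forall x, A x -> compl_ent W (phi F) (nbhd sigma (f x)).
Proof.
  intros HF HW. destruct Hphi as [_ [Hunif Hpt]].
  destruct (Hunif F HF W HW) as [V [HV HVc]].
  destruct (cauchy_approx HG Ht (proj1 HF) HV) as [A [FA HA]].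
  exists A. split; auto. intros x Ax. rewrite <- (feq_eq (Hpt x)).
  apply HVc; [apply (nbhd_min_cauchy HG Ht) | apply HA]; auto.
Qed.

Lemma cont_ext_push F U W : min_cauchy tau F -> nbhd sigma (one h) W ->
  F (fun x => U (f x)) -> phi F (fun y => exists u, U u /\ W (mul y (inv u))).
Proof.
  intros HF HW FU. destruct (cont_ext_approx HF HW) as [A [FA HA]].
  destruct (filter_meet_nonempty (min_cauchy_filter HF) FA FU) as [x [Ax Ufx]].
  destruct (HA x Ax) as [C [phiC [Cfx SC]]].
  apply (filter_mono (min_cauchy_filter (proj1 Hphi F HF)) phiC).
  intros y Cy. exists (f x). split; auto. exact (SC _ _ (nbhd_pt Cfx) Cy).
Qed.

Lemma cont_ext_ker_iff F : min_cauchy tau F ->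
  feq (phi F) (nbhd sigma (one h)) <-> tends_to_one sigma f F.
Proof.
  intro HF. split.
  - intros Hker W HW. destruct (cont_ext_approx HF HW) as [A [FA HA]].
    apply (filter_mono (min_cauchy_filter HF) FA). intros x Ax.
    pose proof (HA x Ax) as Hx. rewrite (feq_eq Hker) in Hx.
    pose proof (compl_ent_nbhd Hx) as Wfx. rewrite (invg1 HH), (mulg1 HH) in Wfx. exact Wfx.
  - intro Hone. apply (feq_of_common_approx HH Hs (proj1 Hphi F HF) (nbhd_min_cauchy HH Hs _)).
    intros W HW. destruct (cont_ext_approx HF HW) as [A [FA HA]].
    destruct (nbhd_one_small HH Hs HW) as [O [HO [O1 SO]]].
    destruct (filter_meet_nonempty (min_cauchy_filter HF) FA (Hone O (nbhd_open HO O1)))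
      as [x [Ax Ofx]].
    exists (f x). split; [apply HA; exact Ax|].
    exists O. split; [|split]; [apply nbhd_open..|]; auto.
Qed.

End ContinuousExtension.

Lemma sig_eq (X : Type) (P : X -> Prop) (a b : {x | P x}) : proj1_sig a = proj1_sig b -> a = b.
Proof. destruct a, b; simpl. intro; subst. f_equal. apply proof_irrelevance. Qed.

Definition trace (g : gops) (H : set g) (HH : is_subgroup H) (F : filt g) : filt (sub_gops HH) :=
  fun P => F (fun x => exists h : H x, P (exist _ x h)).
Arguments trace [g H] HH F.

Section Subgroup.
Variables (g : gops) (H : set g) (HH : is_subgroup H).

Lemma sub_group : is_group g -> is_group (sub_gops HH).
Proof. intro HG. split; [|split]; intros; apply sig_eq; simpl; apply HG. Qed.

Lemma sub_group_top (tau : set (set g)) :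
  is_group_topology tau -> is_group_topology (@sub_top g H HH tau).
Proof.
  intros [[Htop [Hunion Hinter]] [Hmul Hinv]]. split; [split; [|split]|split].
  - exists (fun _ => True). split; auto. split; auto.
  - intros I U HU.
    set (K := {i : I & {O : set g | tau O /\ forall x : sub_gops HH, U i x <-> O (proj1_sig x)}}).
    exists (fun y => exists k : K, proj1_sig (projT2 k) y). split.
    + apply Hunion. intros [i [O HO]]. apply HO.
    + intro x. split.
      * intros [i Hi]. destruct (HU i) as [O [HO HOi]].
        exists (existT _ i (exist (fun O => tau O /\ forall x : sub_gops HH, U i x <-> O (proj1_sig x))
                  O (conj HO HOi))).
        apply HOi. exact Hi.
      * intros [[i [O [HO HOi]]] Hk]. exists i. apply HOi. exact Hk.
  - intros U V [O1 [H1 E1]] [O2 [H2 E2]]. exists (fun y => O1 y /\ O2 y). split.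
    + apply Hinter; auto.
    + intro x. rewrite E1, E2. tauto.
  - intros x y P [O [HO E]] Pxy. apply E in Pxy.
    destruct (Hmul _ _ O HO Pxy) as [U [V [HU [HV [Ux [Vy HUV]]]]]].
    exists (fun b : sub_gops HH => U (proj1_sig b)), (fun b : sub_gops HH => V (proj1_sig b)).
    split; [exists U; split; auto; tauto|].
    split; [exists V; split; auto; tauto|].
    split; auto. split; auto. intros u v Hu Hv. apply E. simpl. auto.
  - intros x P [O [HO E]] Px. apply E in Px.
    destruct (Hinv _ O HO Px) as [U [HU [Ux HUO]]].
    exists (fun b : sub_gops HH => U (proj1_sig b)). split; [exists U; split; auto; tauto|].
    split; auto. intros u Hu. apply E. simpl. auto.
Qed.

Lemma nbhd_sub_lift (tau : set (set g)) b C :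
  nbhd tau (proj1_sig b) C -> nbhd (@sub_top g H HH tau) b (fun b => C (proj1_sig b)).
Proof.
  intros [O [HO [Ob HOC]]]. exists (fun b : sub_gops HH => O (proj1_sig b)).
  split; [exists O; split; auto; tauto|]. split; auto.
Qed.

Lemma nbhd_sub_unlift (tau : set (set g)) b P : nbhd (@sub_top g H HH tau) b P ->
  exists O, tau O /\ O (proj1_sig b) /\ forall b', O (proj1_sig b') -> P b'.
Proof.
  intros [Q [[O [HO E]] [Qb HQP]]]. exists O. split; auto. split; [apply E; auto|].
  intros b' Hb'. apply HQP, E, Hb'.
Qed.

Lemma trace_min_cauchy (tau : set (set g)) (F : filt g) :
  min_cauchy tau F -> F H -> min_cauchy (@sub_top g H HH tau) (trace HH F).
Proof.
  intros [[[Ftop [Fbot [Fmono Finter]]] HC] Hmin] FH.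
  assert (HF : is_filter (trace HH F)).
  { split; [|split; [|split]].
    - apply (Fmono H); auto. intros x hx. exists hx. exact I.
    - intro Hbot. apply Fbot. apply (Fmono _ _ Hbot). intros x [_ []].
    - intros U V HU HUV. apply (Fmono _ _ HU). intros x [hx Ux]. exists hx. auto.
    - intros U V HU HV. apply (Fmono _ _ (Finter _ _ HU HV)). intros x [[h1 U1] [h2 V2]].
      exists h1. rewrite (proof_irrelevance _ h1 h2) at 2. auto. }
  split; [split; [exact HF|]|].
  - intros V HV. destruct (nbhd_sub_unlift HV) as [O [HO [O1 HOV]]].
    destruct (HC O) as [A [FA SA]]; [exists O; auto|].
    exists (fun b : sub_gops HH => A (proj1_sig b)). split.
    + apply (Fmono _ _ (Finter _ _ FA FH)). intros x [Ax hx]. exists hx. exact Ax.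
    + intros b1 b2 A1 A2. apply HOV. exact (SA _ _ A1 A2).
  - intros F' [HF' HC'] HF'F.
    destruct HF' as [F'top [F'bot [F'mono F'inter]]].
    set (G' := fun U : set g => F' (fun b : sub_gops HH => U (proj1_sig b))).
    assert (HG' : cauchy tau G').
    { split; [split; [|split; [|split]]|].
      - exact (F'mono _ _ F'top (fun _ _ => I)).
      - exact F'bot.
      - intros U V HU HUV. apply (F'mono _ _ HU). auto.
      - intros U V HU HV. exact (F'inter _ _ HU HV).
      - intros V HV. destruct (HC' _ (nbhd_sub_lift (b := one (sub_gops HH)) HV)) as [A [F'A SA]].
        exists (fun y => exists h : H y, A (exist _ y h)). split.
        + apply (F'mono _ _ F'A). intros [y hy] Ay. exists hy. exact Ay.
        + intros y1 y2 [h1 A1] [h2 A2]. exact (SA _ _ A1 A2). }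
    assert (HG'F : forall U, G' U -> F U).
    { intros U HU. apply (Fmono _ _ (HF'F _ HU)). intros x [hx Ux]. exact Ux. }
    intros U HU. apply (F'mono _ _ (Hmin G' HG' HG'F _ HU)).
    intros [y hy] [hy' Uy]. rewrite (proof_irrelevance _ hy hy'). exact Uy.
Qed.

Lemma trace_tends_to_one (sigma : set (set g)) (F : filt g) :
  is_filter F -> F H -> tends_to_one sigma (fun x => x) F ->
  tends_to_one (@sub_top g H HH sigma) (fun b => b) (trace HH F).
Proof.
  intros [_ [_ [Fmono Finter]]] FH Hone P HP.
  destruct (nbhd_sub_unlift HP) as [O [HO [O1 HOP]]].
  apply (Fmono _ _ (Finter _ _ (Hone O (nbhd_open HO O1)) FH)).
  intros x [Ox hx]. exists hx. apply HOP. exact Ox.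
Qed.

Section Embedding.
Variables (HG : is_group g) (tau : set (set g)) (Ht : is_group_topology tau).
Variables (j : filt (sub_gops HH) -> filt g)
  (Hj : is_cont_ext (@sub_top g H HH tau) tau (fun b : sub_gops HH => proj1_sig b) j).

Lemma feq_embed_trace F : min_cauchy tau F -> F H -> feq (j (trace HH F)) F.
Proof.
  intros HF FH. pose proof (trace_min_cauchy HF FH) as HFB.
  apply (feq_of_common_approx HG Ht (proj1 Hj _ HFB) HF). intros W HW.
  destruct (cont_ext_approx (sub_group HG) (sub_group_top Ht) Hj HFB HW) as [A [FBA HA]].
  destruct (cauchy_approx HG Ht (proj1 HF) HW) as [A2 [FA2 HA2]].
  destruct (filter_meet_nonempty (min_cauchy_filter HF) FBA FA2) as [x [[hx Ax] A2x]].
  exists x. split.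
  - exact (HA (exist _ x hx) Ax).
  - exact (HA2 x A2x).
Qed.

Lemma embed_tends_to_one (sigma : set (set g)) (Hs : is_group_topology sigma)
  (Hsigma_tau : forall U, sigma U -> tau U) X :
  min_cauchy (@sub_top g H HH tau) X -> tends_to_one (@sub_top g H HH sigma) (fun b => b) X ->
  tends_to_one sigma (fun x => x) (j X).
Proof.
  intros HX Hone W HW.
  destruct (nbhd_one_mul HG Hs HW) as [W1 [[O [HO [O1 HOW1]]] HWW]].
  pose proof (cont_ext_push (sub_group HG) (sub_group_top Ht) Hj HX
    (U := O) (nbhd_open (Hsigma_tau _ HO) O1)
    (Hone _ (nbhd_sub_lift (b := one (sub_gops HH)) (nbhd_open HO O1)))) as Hpush.
  apply (filter_mono (min_cauchy_filter (proj1 Hj X HX)) Hpush).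
  intros y [u [Ou Oyu]]. rewrite <- (mulgKV HG y u). apply HWW; auto.
Qed.

End Embedding.
End Subgroup.

Theorem corollary1p3 (G : gops) (HG : is_group G) (B N : set G)
  (HBN : BN_pair B N) (HB : @is_subgroup G B)
  (S T : set (set G)) (HS : is_group_topology S) (HT : is_group_topology T)
  (HST : forall U, S U -> T U) (HBopen : S B)
  (phi : filt G -> filt G)
  (psi : filt (sub_gops HB) -> filt (sub_gops HB))
  (j : filt (sub_gops HB) -> filt G)
  (Hphi : is_cont_ext T S (fun x : G => x) phi)
  (Hpsi : is_cont_ext (@sub_top G B HB T) (@sub_top G B HB S)
            (fun x : sub_gops HB => x) psi)
  (Hj : is_cont_ext (@sub_top G B HB T) T (fun x : sub_gops HB => proj1_sig x) j) :
  forall F : filt G,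
    ker T S phi F <->
    exists FB, ker (@sub_top G B HB T) (@sub_top G B HB S) psi FB /\ feq (j FB) F.
Proof.
  intro F.
  pose proof (sub_group HB HG) as HGB.
  pose proof (sub_group_top HB HT) as HTB.
  pose proof (sub_group_top HB HS) as HSB.
  split.
  - intros [HF Hker].
    pose proof (proj1 (cont_ext_ker_iff HG HG HT HS Hphi HF) Hker) as Fone.
    pose proof (Fone B (nbhd_open HBopen (sg_one HB))) as FB.
    pose proof (trace_min_cauchy HB HF FB) as HFB.
    exists (trace HB F). split; [split; [exact HFB|]|].
    + apply (cont_ext_ker_iff HGB HGB HTB HSB Hpsi HFB).
      exact (trace_tends_to_one (min_cauchy_filter HF) FB Fone).
    + exact (feq_embed_trace HG HT Hj HF FB).
  - intros [FB [[HFB Hker] Hjf]].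
    rewrite <- (feq_eq Hjf). split; [exact (proj1 Hj FB HFB)|].
    apply (cont_ext_ker_iff HG HG HT HS Hphi (proj1 Hj FB HFB)).
    apply (embed_tends_to_one HG HT Hj HS HST HFB).
    exact (proj1 (cont_ext_ker_iff HGB HGB HTB HSB Hpsi HFB) Hker).
Qed.
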